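(* Let $T$ be a nonempty rooted tree (labelled, unlabelled planar, or unlabelled non-planar) and $X^T$ its associated simplicial set. Then the Segal map $(d_0,d_2)\colon X^T_2\to X^T_1\times X^T_1$ is not surjective; in particular $X^T$ is not a 1-Segal set (i.e. not isomorphic to the nerve of a category).
   Context: A rooted tree $T$ is a finite tree with a distinguished vertex $v_0$ (the root); its vertex set is partially ordered by $v\le w$ iff $v$ lies on the unique path from $v_0$ to $w$. A planar rooted tree additionally carries, for each vertex, a total order on the edges going up from it. A rooted forest is a finite disjoint union of rooted trees. For a subset $S$ of the vertices of a rooted forest $F$, the subforest spanned by $S$ has vertex set $S$, the edges of $F$ with both endpoints in $S$, and the induced partial order (planar structures inherited). A subset $L\subseteq V(F)$ defines a lower subforest if $w\in L$ and $v\le w$ imply $v\in L$. For $n\ge 1$, a layering of $n-1$ cuts of $F$ is a chain $V(F)=L_0\supseteq L_1\supseteq\cdots\supseteq L_n=\varnothing$ of subsets each defining a lower subforest of $F$. An admissible subforest of $T$ is the subforest spanned by $L_i\setminus L_j$ ($i\le j$) for some layering of $T$. The simplicial set $X^T$ (labelled version): $X^T_0$ is a point; for $n\ge1$, $X^T_n$ is the set of pairs $(H; L_0\supseteq\cdots\supseteq L_n)$ with $H$ an admissible subforest of $T$ and $V(H)=L_0\supseteq\cdots\supseteq L_n=\varnothing$ a layering of $H$ (so $X^T_1$ is the set of admissible subforests). For $n\ge2$: $d_0(H;L_\bullet)=(H|_{L_1};L_1\supseteq\cdots\supseteq L_n)$; $d_n(H;L_\bullet)=(H|_{L_0\setminus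 L_{n-1}};L_0\setminus L_{n-1}\supseteq\cdots\supseteq L_{n-1}\setminus L_{n-1})$; for $0<i<n$, $d_i$ deletes $L_i$; degeneracies $s_i$ repeat $L_i$. In the unlabelled (planar or non-planar) version, $X^T_n$ consists of isomorphism classes of such pairs under isomorphisms of rooted forests (preserving planar structure in the planar case) carrying each $L_i$ onto $L'_i$. In particular for $(H\supseteq L\supseteq\varnothing)\in X^T_2$, $d_0$ gives the lower part $H|_L$ and $d_2$ gives the upper part $H|_{V(H)\setminus L}$. *)

From mathcomp Require Import all_boot.
Set Implicit Arguments. Unset Strict Implicit. Unset Printing Implicit Defensive.

(* A finite rooted tree T is encoded by a finite vertex type V together with a
   parent function [par : V -> option V]; the root is the unique vertex with no
   parent, and every vertex reaches the root by iterating [par].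
   Every subforest considered is a subforest of this fixed tree T, encoded by
   its vertex set S : {set V} (edges = edges of T with both ends in S, order =
   partial order of T restricted to S). *)

Section RootedTree.
Variables (V : finType) (par : V -> option V).

Fixpoint iter_par (k : nat) (w : V) : option V :=
  match k with 0 => Some w | k.+1 => obind par (iter_par k w) end.

Definition is_rooted_tree (r : V) : Prop :=
  par r = None /\ forall v, exists k, iter_par k v = Some r.

Definition tle (v w : V) : Prop := exists k, iter_par k w = Some v.

Definition is_lower_in (H L : {set V}) : Prop :=
  L \subset H /\ forall v w, w \in L -> v \in H -> tle v w -> v \in L.

Definition is_layering (H : {set V}) (n : nat) (L : nat -> {set V}) : Prop :=
  0 < n /\ L 0 = H /\ L n = set0 /\
  (forall i, i < n -> L i.+1 \subset L i) /\
  (forall i, i <= n -> is_lower_in H (L i)).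

Definition admissible (S : {set V}) : Prop :=
  exists n (L : nat -> {set V}) i j,
    is_layering setT n L /\ i <= j <= n /\ S = L i :\: L j.

Definition X2 (H : {set V}) (L : nat -> {set V}) : Prop :=
  admissible H /\ is_layering H 2 L.

Definition d0_2 (L : nat -> {set V}) : {set V} := L 1.
Definition d2_2 (L : nat -> {set V}) : {set V} := L 0 :\: L 1.

Definition forest_iso (A B : {set V}) : Prop :=
  exists f : V -> V,
    {in A &, injective f} /\ f @: A = B /\
    (forall v w, v \in A -> w \in A -> (tle v w <-> tle (f v) (f w))).

(* planar structure: [pl] restricted to the children of each vertex
   is a strict total order (the order on the edges going up) *)
Definition planar_structure (pl : rel V) : Prop :=
  (forall c, ~~ pl c c) /\
  (forall a b c, par a = par b -> par b = par c -> pl a b -> pl b c -> pl a c) /\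
  (forall a b v, par a = Some v -> par b = Some v -> a != b -> pl a b || pl b a).

Definition planar_iso (pl : rel V) (A B : {set V}) : Prop :=
  exists f : V -> V,
    {in A &, injective f} /\ f @: A = B /\
    (forall v w, v \in A -> w \in A -> (tle v w <-> tle (f v) (f w))) /\
    (forall v c1 c2, v \in A -> c1 \in A -> c2 \in A ->
       par c1 = Some v -> par c2 = Some v -> (pl c1 c2 <-> pl (f c1) (f c2))).

(* surjectivity of the Segal map (d_0, d_2) : X^T_2 -> X^T_1 x X^T_1, where
   X^T_1, X^T_2 are taken up to the equivalence [iso]
   ([iso := eq] gives the labelled version) *)
Definition segal2_surjective (iso : {set V} -> {set V} -> Prop) : Prop :=
  forall A B, admissible A -> admissible B ->
    exists H (L : nat -> {set V}),
      X2 H L /\ iso (d0_2 L) A /\ iso (d2_2 L) B.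

End RootedTree.

From mathcomp Require Import all_boot zify.

(* The two faces of a 2-simplex are disjoint subforests of T, so their sizes
   add up to at most |T|; hence they cannot both be isomorphic to T, which has
   at least one vertex. *)

Section SegalMap.
Variables (V : finType) (par : V -> option V).

Lemma admissible_setT : admissible par [set: V].
Proof.
exists 1, (fun k => if k == 0 then [set: V] else set0), 0, 1.
split; last by rewrite setD0.
do 4 split => //; first by case=> [|[|]] //= _; exact: sub0set.
case=> [|[|]] //= _; split; rewrite ?subsetT ?sub0set //.
by move=> v w; rewrite inE.
Qed.

Lemma card_faces2_le (L : nat -> {set V}) :
  #|d0_2 L| + #|d2_2 L| <= #|V|.
Proof.
have sub_compl : d2_2 L \subset ~: d0_2 L by rewrite /d2_2 setDE subsetIr.
by rewrite -(cardsC (d0_2 L)) leq_add2l subset_leq_card.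
Qed.

Lemma not_segal2_surjective (iso : {set V} -> {set V} -> Prop) :
  #|V| > 0 -> (forall A B, iso A B -> #|A| = #|B|) ->
  ~ segal2_surjective par iso.
Proof.
move=> V_gt0 iso_card segal.
have [H [L [_ [iso0 iso2]]]] := segal _ _ admissible_setT admissible_setT.
have := card_faces2_le L.
by rewrite (iso_card _ _ iso0) (iso_card _ _ iso2) cardsT; lia.
Qed.

Lemma forest_iso_card A B : forest_iso par A B -> #|A| = #|B|.
Proof. by move=> [f [f_inj [<- _]]]; rewrite card_in_imset. Qed.

Lemma planar_iso_card (pl : rel V) A B : planar_iso par pl A B -> #|A| = #|B|.
Proof. by move=> [f [f_inj [<- _]]]; rewrite card_in_imset. Qed.

End SegalMap.

Theorem mainTheorem2 (V : finType) (par : V -> option V) (r : V) (pl : rel V) :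
  is_rooted_tree par r -> planar_structure par pl ->
  ~ segal2_surjective par (@eq {set V}) /\
  ~ segal2_surjective par (forest_iso par) /\
  ~ segal2_surjective par (planar_iso par pl).
Proof.
move=> _ _.
have V_gt0 : #|V| > 0 by apply/card_gt0P; exists r.
split; [|split]; apply: not_segal2_surjective => //.
- by move=> A B ->.
- exact: forest_iso_card.
- exact: planar_iso_card.
Qed.
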